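(* Let $G$ be a finite connected groupoid with $G_0=\{e_1,\dots,e_r\}$, $A=\bigoplus_{i=1}^r A_i$ a unital ring with $A_i:=A_{e_i}$ having identity $1_i$, and $\alpha=(A_g,\alpha_g)_{g\in G}$ a unital partial action of $G$ on $A$. The following are equivalent: (i) $A\subset A\star_\alpha G$ is a separable extension; (ii) there exists $a\in C(A)$ (the center of $A$) such that $t_i(a)=1_i$ for all $i=1,\dots,r$.
   Context: A groupoid $G$ is a small category in which every morphism is invertible; $G_0$ is its object set (objects identified with identity morphisms), $s,t$ source and target; $gh$ is defined iff $s(g)=t(h)$; $G(e,f)$ is the set of morphisms from $e$ to $f$; $G$ is connected if $G(e,f)\neq\emptyset$ for all $e,f\in G_0$. A unital partial action of $G$ on $A$ is a family $\alpha=(A_g,\alpha_g)_{g\in G}$ where $A_{t(g)}$ is a two-sided ideal of $A$, $A_g=A1_g$ is a two-sided ideal of $A_{t(g)}$ with $1_g$ a central idempotent of $A$, $\alpha_g:A_{g^{-1}}\to A_g$ a ring isomorphism, such that $\alpha_e=\mathrm{id}_{A_e}$ for $e\in G_0$, $\alpha_h^{-1}(A_{g^{-1}}\cap A_h)\subseteq A_{(gh)^{-1}}$ and $\alpha_g(\alpha_h(x))=\alpha_{gh}(x)$ for $x\in\alpha_h^{-1}(A_{g^{-1}}\cap A_h)$, whenever $s(g)=t(h)$. The partial skew groupoid ring $A\star_\alpha G=\bigoplus_{g\in G}A_g\delta_g$ has multiplication $(a_g\delta_g)(b_h\delta_h)=\alpha_g(\alpha_{g^{-1}}(a_g)b_h)\delta_{gh}$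 if $s(g)=t(h)$ and $0$ otherwise; it is unital with $1=\sum_{e\in G_0}1_e\delta_e$, and $A$ is regarded as a subring via $a\mapsto\sum_{e\in G_0}(a1_e)\delta_e$. Trace maps: $t_{i,j}(a)=\sum_{g\in G(e_i,e_j)}\alpha_g(a1_{g^{-1}})$ and $t_j(a)=\sum_{i=1}^r t_{i,j}(a)$ for $a\in A$. A ring extension $R\subseteq S$ is separable if the multiplication map $S\otimes_R S\to S$ splits as a map of $(S,S)$-bimodules; equivalently there exists $x\in S\otimes_R S$ with $m(x)=1_S$ and $sx=xs$ for all $s\in S$. *)

From HB Require Import structures.
From mathcomp Require Import all_boot all_order all_algebra.
Set Implicit Arguments. Unset Strict Implicit. Unset Printing Implicit Defensive.
Import GRing.Theory.
Local Open Scope ring_scope.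

(* A finite groupoid: morphisms and objects are finite types; objects are
   identified with their identity morphisms via [idm].  [comp g h] is the
   composite gh (meaningful only when src g = tgt h). *)
Record groupoid := Groupoid {
  mor : finType;
  obj : finType;
  src : mor -> obj;
  tgt : mor -> obj;
  idm : obj -> mor;
  comp : mor -> mor -> mor;
  inv : mor -> mor;
  src_idm : forall e, src (idm e) = e;
  tgt_idm : forall e, tgt (idm e) = e;
  src_comp : forall g h, src g = tgt h -> src (comp g h) = src h;
  tgt_comp : forall g h, src g = tgt h -> tgt (comp g h) = tgt g;
  comp_assoc : forall g h k, src g = tgt h -> src h = tgt k ->
                 comp g (comp h k) = comp (comp g h) k;
  comp_idl : forall g, comp (idm (tgt g)) g = g;
  comp_idr : forall g, comp g (idm (src g)) = g;
  src_inv : forall g, src (inv g) = tgt g;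
  tgt_inv : forall g, tgt (inv g) = src g;
  comp_invl : forall g, comp (inv g) g = idm (src g);
  comp_invr : forall g, comp g (inv g) = idm (tgt g)
}.

Definition connected (G : groupoid) : Prop :=
  forall e f : obj G, exists g : mor G, src g = e /\ tgt g = f.

(* x lies in the ideal A * e (e a central idempotent) *)
Definition in_ideal (A : pzRingType) (e x : A) : Prop := x * e = x.

(* Unital partial action (A_g = A 1_g, alpha_g : A_{g^-1} -> A_g). *)
Record unital_partial_action (G : groupoid) (A : pzRingType)
    (one_ : mor G -> A) (alpha : mor G -> A -> A) : Prop := {
  upa_idem : forall g, one_ g * one_ g = one_ g;
  upa_central : forall g x, one_ g * x = x * one_ g;
  upa_sub : forall g, one_ g * one_ (idm (tgt g)) = one_ g;
  upa_add : forall g x y, in_ideal (one_ (inv g)) x -> in_ideal (one_ (inv g)) y ->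
     alpha g (x + y) = alpha g x + alpha g y;
  upa_mul : forall g x y, in_ideal (one_ (inv g)) x -> in_ideal (one_ (inv g)) y ->
     alpha g (x * y) = alpha g x * alpha g y;
  upa_one : forall g, alpha g (one_ (inv g)) = one_ g;
  upa_into : forall g x, in_ideal (one_ (inv g)) x -> in_ideal (one_ g) (alpha g x);
  upa_inj : forall g x y, in_ideal (one_ (inv g)) x -> in_ideal (one_ (inv g)) y ->
     alpha g x = alpha g y -> x = y;
  upa_surj : forall g y, in_ideal (one_ g) y ->
     exists2 x, in_ideal (one_ (inv g)) x & alpha g x = y;
  upa_id : forall e x, in_ideal (one_ (idm e)) x -> alpha (idm e) x = x;
  upa_comp : forall g h, src g = tgt h -> forall x,
     in_ideal (one_ (inv h)) x -> in_ideal (one_ (inv g)) (alpha h x) ->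
     in_ideal (one_ (inv (comp g h))) x /\ alpha g (alpha h x) = alpha (comp g h) x
}.

(* Elements of A *_alpha G are represented as finite functions g |-> a_g,
   i.e. sum_g a_g delta_g, with a_g in A_g. *)
Definition in_skew (G : groupoid) (A : pzRingType) (one_ : mor G -> A)
  (f : {ffun mor G -> A}) : Prop := forall g, in_ideal (one_ g) (f g).

(* (a_g delta_g)(b_h delta_h) = alpha_g(alpha_{g^-1}(a_g) b_h) delta_{gh} if s(g)=t(h) *)
Definition skew_mul (G : groupoid) (A : pzRingType) (alpha : mor G -> A -> A)
  (f f' : {ffun mor G -> A}) : {ffun mor G -> A} :=
  [ffun k => \sum_(g : mor G) \sum_(h : mor G | (src g == tgt h) && (comp g h == k))
               alpha g (alpha (inv g) (f g) * f' h)].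

(* embedding a |-> sum_e (a 1_e) delta_e *)
Definition skew_emb (G : groupoid) (A : pzRingType) (one_ : mor G -> A) (a : A)
  : {ffun mor G -> A} :=
  [ffun g => if g == idm (src g) then a * one_ g else 0].

Definition balanced (T : zmodType) (inS : T -> Prop) (mul : T -> T -> T)
  (inR : T -> Prop) (M : zmodType) (phi : T -> T -> M) : Prop :=
  [/\ forall u v w, inS u -> inS v -> inS w -> phi (u + v) w = phi u w + phi v w,
      forall u v w, inS u -> inS v -> inS w -> phi u (v + w) = phi u v + phi u w &
      forall u r v, inS u -> inR r -> inS v -> phi (mul u r) v = phi u (mul r v)].

(* Separable extension R ⊆ S: there is x = sum_k x_k ⊗ y_k in S ⊗_R S with
   m(x) = 1 and s x = x s for all s in S.  Equality in S ⊗_R S is expressed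
   through the universal property of the tensor product: two formal sums are
   equal in S ⊗_R S iff every R-balanced biadditive map takes equal values. *)
Definition separable_ext (T : zmodType) (inS : T -> Prop) (mul : T -> T -> T)
  (one : T) (inR : T -> Prop) : Prop :=
  exists (n : nat) (x y : 'I_n -> T),
    [/\ forall k, inS (x k) /\ inS (y k),
        \sum_(k < n) mul (x k) (y k) = one &
        forall s, inS s -> forall (M : zmodType) (phi : T -> T -> M),
          balanced inS mul inR phi ->
          \sum_(k < n) phi (mul s (x k)) (y k) = \sum_(k < n) phi (x k) (mul (y k) s)].

Definition trace_t (G : groupoid) (A : pzRingType) (one_ : mor G -> A)
  (alpha : mor G -> A -> A) (j : obj G) (a : A) : A :=
  \sum_(g : mor G | tgt g == j) alpha g (a * one_ (inv g)).

(* Write [act g x = alpha_g (x 1_{g^-1})] for the total extension of [alpha_g]: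
   it is additive and multiplicative on all of [A], with
   [act g (act h x) = act (gh) x * 1_g] and [act g 1_h = 1_g 1_{gh}], so every
   computation in the skew ring becomes one in [A], where
   [(f f')(k) = \sum_{t(g) = t(k)} f(g) act g (f'(g^-1 k))].
   (i) -> (ii): for a separability element [\sum_i x_i (x) y_i] put
   [a = \sum_i \sum_e x_i(e) y_i(e)]. Its centrality, tested against the
   balanced maps [u (x) v |-> u(e) v(k)] with [t(k) = e], gives for [s = b] in
   [A] that [a] is central, and for [s = 1_{g^-1} delta_{g^-1}] that
   [\sum_i act g^-1 (x_i(g)) y_i(g^-1) = a 1_{g^-1}]; applying [act g] and
   summing over [t(g) = j] turns [\sum_i x_i y_i = 1] into [t_j(a) = 1_j].
   (ii) -> (i): [\sum_g act g a delta_g (x) 1_{g^-1} delta_{g^-1}] is a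
   separability element. Its centrality need only be checked on
   [s = d delta_h]; after reindexing [g |-> hg], balancedness reduces both
   sides to the same tensor with coefficients [d act (hg) a] and
   [act (hg) a d], which agree because [act (hg) a] is central. *)

From Pilot Require Import Defs.
From HB Require Import structures.
From mathcomp Require Import all_boot all_order all_algebra.
Set Implicit Arguments. Unset Strict Implicit. Unset Printing Implicit Defensive.
Import GRing.Theory.
Local Open Scope ring_scope.

Local Notation inv := Defs.inv.
Local Notation comp := Defs.comp.

Section GroupoidTheory.
Variable G : groupoid.
Implicit Types (g h k : mor G) (e : obj G).

Lemma compKg g h : src g = tgt h -> comp (inv g) (comp g h) = h.
Proof.
move=> sgh; rewrite comp_assoc ?src_inv ?tgt_inv // comp_invl sgh.
exact: comp_idl.
Qed.

Lemma inv_inv g : inv (inv g) = g.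
Proof.
rewrite -[RHS](compKg (src_inv g)) comp_invl -[src g]tgt_inv -src_inv.
by rewrite comp_idr.
Qed.

Lemma compKVg g h : tgt g = tgt h -> comp g (comp (inv g) h) = h.
Proof. by move=> tgh; rewrite -{1}[g]inv_inv compKg // src_inv. Qed.

Lemma inv_idm e : inv (idm e) = idm e.
Proof.
by rewrite -[LHS]comp_idr src_inv tgt_idm comp_invl src_idm.
Qed.

Lemma compgK g h : src g = tgt h -> comp (comp g h) (inv h) = g.
Proof.
move=> sgh; rewrite -comp_assoc ?tgt_inv // comp_invr -sgh; exact: comp_idr.
Qed.

Lemma compgKV g h : src g = src h -> comp (comp g (inv h)) h = g.
Proof. by move=> sgh; rewrite -{2}[h]inv_inv compgK // tgt_inv. Qed.

Lemma inv_comp g h : src g = tgt h -> inv (comp g h) = comp (inv h) (inv g).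
Proof.
move=> sgh; have tgh : tgt h = tgt (inv g) by rewrite tgt_inv.
have ghK : comp (comp g h) (comp (inv h) (inv g)) = idm (tgt (comp g h)).
  by rewrite -comp_assoc ?tgt_comp ?src_inv ?tgt_inv // compKVg // comp_invr.
rewrite -[LHS]comp_idr src_inv -ghK compKg // tgt_comp ?src_comp ?src_inv ?tgt_inv //.
Qed.

Lemma idm_inj : injective (@idm G).
Proof. by move=> e e' /(congr1 (@src G)); rewrite !src_idm. Qed.

Lemma comp_invl_eq g k h : tgt g = tgt k ->
  (comp (inv g) k == h) = (src g == tgt h) && (k == comp g h).
Proof.
move=> tgk; apply/eqP/andP => [<-|[/eqP sgh /eqP ->]]; last exact: compKg.
by rewrite tgt_comp ?src_inv // tgt_inv compKVg.
Qed.

Lemma comp_invl_eq_r g k h : tgt g = tgt k ->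
  (comp (inv g) k == h) = (src h == src k) && (g == comp k (inv h)).
Proof.
move=> tgk; apply/eqP/andP => [<-|[/eqP shk /eqP ->]].
  by rewrite src_comp ?src_inv // inv_comp ?src_inv // inv_inv compKVg.
by rewrite inv_comp ?tgt_inv // inv_inv compgKV.
Qed.

End GroupoidTheory.

Lemma additive_in0 (V W : zmodType) (Q : V -> Prop) (f : V -> W) : Q 0 ->
  (forall u v, Q u -> Q v -> f (u + v) = f u + f v) -> f 0 = 0.
Proof. by move=> Q0 fD; apply: (addrI (f 0)); rewrite -fD // !addr0. Qed.

Lemma additive_in_sum (V W : zmodType) (Q : V -> Prop) (f : V -> W)
    (I : Type) (r : seq I) (R : pred I) (F : I -> V) :
  Q 0 -> (forall u v, Q u -> Q v -> Q (u + v)) ->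
  (forall u v, Q u -> Q v -> f (u + v) = f u + f v) ->
  (forall i, R i -> Q (F i)) ->
  f (\sum_(i <- r | R i) F i) = \sum_(i <- r | R i) f (F i).
Proof.
move=> Q0 QD fD QF; pose K u w := Q u /\ f u = w.
suff [] : K (\sum_(i <- r | R i) F i) (\sum_(i <- r | R i) f (F i)) by [].
apply: big_ind2 => [|u1 w1 u2 w2 [Qu1 <-] [Qu2 <-]|i /QF] //.
- by split; last exact: additive_in0 fD.
- by split; [exact: QD | exact: fD].
Qed.

Lemma separable_ext_fin (T : zmodType) (inS : T -> Prop) (mul : T -> T -> T) (one : T)
    (inR : T -> Prop) (I : finType) (x y : I -> T) :
  (forall i, inS (x i) /\ inS (y i)) -> \sum_i mul (x i) (y i) = one ->
  (forall s, inS s -> forall (M : zmodType) (phi : T -> T -> M),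
     balanced inS mul inR phi ->
     \sum_i phi (mul s (x i)) (y i) = \sum_i phi (x i) (mul (y i) s)) ->
  separable_ext inS mul one inR.
Proof.
move=> xyS xy1 xyC.
have sum_enum (R : nmodType) (F : I -> R) :
    \sum_(k < #|I|) F (enum_val k) = \sum_i F i.
  by rewrite -big_enum_val; apply: eq_bigl => i; rewrite inE.
exists #|I|, (fun k => x (enum_val k)), (fun k => y (enum_val k)); split.
- by move=> i; apply: xyS.
- by rewrite (sum_enum _ (fun i => mul (x i) (y i))).
- move=> s sS M phi bal; rewrite (sum_enum _ (fun i => phi (mul s (x i)) (y i))).
  by rewrite (sum_enum _ (fun i => phi (x i) (mul (y i) s))); apply: xyC.
Qed.

Section PartialAction.
Variables (G : groupoid) (A : pzRingType).
Variables (one_ : mor G -> A) (alpha : mor G -> A -> A).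
Hypothesis P : unital_partial_action one_ alpha.
Implicit Types (g h : mor G) (e : obj G) (x y : A).

Lemma in_ideal_one g : in_ideal (one_ g) (one_ g).
Proof. exact: upa_idem P g. Qed.

Lemma in_idealMl g x y : in_ideal (one_ g) y -> in_ideal (one_ g) (x * y).
Proof. by rewrite /in_ideal -mulrA => ->. Qed.

Lemma in_idealMr g x y : in_ideal (one_ g) x -> in_ideal (one_ g) (x * y).
Proof. by move=> xg; rewrite /in_ideal -mulrA -(upa_central P) mulrA xg. Qed.

Lemma in_ideal_mul1l g x : in_ideal (one_ g) x -> one_ g * x = x.
Proof. by rewrite (upa_central P). Qed.

Lemma in_ideal_tgt g x : in_ideal (one_ g) x -> in_ideal (one_ (idm (tgt g))) x.
Proof. by rewrite /in_ideal => <-; rewrite -mulrA (upa_sub P). Qed.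

Lemma alpha_invK g x : in_ideal (one_ g) x -> alpha g (alpha (inv g) x) = x.
Proof.
move=> xg; have xgV : in_ideal (one_ (inv (inv g))) x by rewrite inv_inv.
have [_ ->] := upa_comp P (esym (tgt_inv g)) xgV (upa_into P xgV).
by rewrite comp_invr (upa_id P) //; apply: in_ideal_tgt.
Qed.

Lemma alpha_comp_in g h x : src g = tgt h ->
  in_ideal (one_ (inv g)) x -> in_ideal (one_ h) x ->
  in_ideal (one_ (comp g h)) (alpha g x).
Proof.
move=> sgh xgV xh; set y := alpha (inv h) x.
have yhV : in_ideal (one_ (inv h)) y by apply: (upa_into P); rewrite inv_inv.
have hy : alpha h y = x by rewrite alpha_invK.
have yg : in_ideal (one_ (inv g)) (alpha h y) by rewrite hy.
have [ygh] := upa_comp P sgh yhV yg; rewrite -hy => ->.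
exact: (upa_into P).
Qed.

(* [alpha g] restricts to an isomorphism of the unital rings
   [A 1_{g^-1} 1_h] and [A 1_g 1_{gh}], so it maps unit to unit. *)
Lemma alpha_one_mul g h : src g = tgt h ->
  alpha g (one_ (inv g) * one_ h) = one_ g * one_ (comp g h).
Proof.
move=> sgh; set u := alpha g _; set v := one_ g * one_ (comp g h).
have uginv : in_ideal (one_ (inv g)) (one_ (inv g) * one_ h).
  exact/in_idealMr/in_ideal_one.
have uv : u * v = u.
  rewrite /v mulrA (upa_into P uginv).
  exact: alpha_comp_in sgh uginv (in_idealMl _ (in_ideal_one h)).
have vg : in_ideal (one_ (inv (inv g))) v by rewrite inv_inv; exact/in_idealMr/in_ideal_one.
set w := alpha (inv g) v.
have wgV : in_ideal (one_ (inv g)) w := upa_into P vg.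
have wh : in_ideal (one_ h) w.
  rewrite -[h](compKg sgh); apply: alpha_comp_in vg _; first by rewrite src_inv tgt_comp.
  exact: in_idealMl (in_ideal_one _).
have vu : v * u = v.
  have wv : alpha g w = v := alpha_invK (in_idealMr _ (in_ideal_one g)).
  by rewrite -{1}wv -(upa_mul P) // mulrA wgV wh.
have vC : u * v = v * u.
  by rewrite /v mulrA -(upa_central P g u) -mulrA -(upa_central P _ u) mulrA.
by rewrite -uv vC vu.
Qed.

Definition act g x := alpha g (x * one_ (inv g)).

Lemma act_alpha g x : in_ideal (one_ (inv g)) x -> act g x = alpha g x.
Proof. by rewrite /act => ->. Qed.

Lemma act_in g x : in_ideal (one_ g) (act g x).
Proof. exact/(upa_into P)/in_idealMl/in_ideal_one. Qed.

Lemma actD g : {morph act g : x y / x + y}.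
Proof.
by move=> x y; rewrite /act mulrDl (upa_add P) //; apply/in_idealMl/in_ideal_one.
Qed.

Lemma act0 g : act g 0 = 0.
Proof. by apply: (addrI (act g 0)); rewrite -actD !addr0. Qed.

Lemma act_sum g (I : Type) (r : seq I) (Q : pred I) (F : I -> A) :
  act g (\sum_(i <- r | Q i) F i) = \sum_(i <- r | Q i) act g (F i).
Proof. exact: (big_morph _ (actD g) (act0 g)). Qed.

Lemma actM g : {morph act g : x y / x * y}.
Proof.
move=> x y; rewrite /act -(upa_mul P); try exact/in_idealMl/in_ideal_one.
rewrite -!mulrA; congr (alpha g (x * _)).
by rewrite mulrA (upa_central P) -mulrA (upa_idem P).
Qed.

Lemma act_oneV g : act g (one_ (inv g)) = one_ g.
Proof. by rewrite /act (upa_idem P) (upa_one P). Qed.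

Lemma act_one g h : src g = tgt h -> act g (one_ h) = one_ g * one_ (comp g h).
Proof. by move=> sgh; rewrite /act (upa_central P) alpha_one_mul. Qed.

Lemma act_idm e x : act (idm e) x = x * one_ (idm e).
Proof. by rewrite /act inv_idm (upa_id P) //; apply/in_idealMl/in_ideal_one. Qed.

Lemma act_comp g h x : src g = tgt h ->
  act g (act h x) = act (comp g h) x * one_ g.
Proof.
move=> sgh; set k := comp g h.
have hkV : act h (one_ (inv k)) = one_ h * one_ (inv g).
  rewrite act_one; last by rewrite tgt_inv src_comp.
  by rewrite inv_comp // compKVg // tgt_inv.
set y := x * one_ (inv k) * one_ (inv h).
have yhV : in_ideal (one_ (inv h)) y by apply/in_idealMl/in_ideal_one.
have hy : alpha h y = act h x * one_ (inv g).
  by rewrite -[alpha h y]/(act h (x * one_ (inv k))) actM hkV mulrA act_in.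
have ygV : in_ideal (one_ (inv g)) (alpha h y) by rewrite hy; apply/in_idealMl/in_ideal_one.
have [_ ghy] := upa_comp P sgh yhV ygV.
have yE : y = x * one_ (inv h) * one_ (inv k).
  by rewrite /y -!mulrA (upa_central P (inv k)).
rewrite /act -hy ghy -/k yE -/(act k _) -/(act k x) actM act_one; last first.
  by rewrite tgt_inv src_comp.
by rewrite compgK // mulrA act_in.
Qed.

Lemma act_actV g x : act g (act (inv g) x) = x * one_ g.
Proof.
by rewrite act_comp ?tgt_inv // comp_invr act_idm -mulrA (upa_central P) (upa_sub P).
Qed.

Lemma act_invK g x : in_ideal (one_ g) x -> act g (act (inv g) x) = x.
Proof. exact: etrans (act_actV g x). Qed.

Lemma act_in_comp g h x : src g = tgt h -> in_ideal (one_ h) x ->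
  in_ideal (one_ (comp g h)) (act g x).
Proof.
move=> sgh <-; rewrite actM act_one // mulrA.
exact/in_idealMl/in_ideal_one.
Qed.

Lemma act_central g a : (forall b, a * b = b * a) ->
  forall y, act g a * y = y * act g a.
Proof.
move=> aC y; set z := one_ g * y.
have zg : in_ideal (one_ g) z by apply/in_idealMr/in_ideal_one.
have ag := act_in g a.
rewrite -{1}ag -mulrA -/z -(act_invK zg) -actM aC actM (act_invK zg) /z.
by rewrite (upa_central P g y) -mulrA (in_ideal_mul1l ag).
Qed.

Lemma alpha_alphaV_mul g b c : in_ideal (one_ g) b ->
  alpha g (alpha (inv g) b * c) = b * act g c.
Proof.
move=> bg; have bgV : in_ideal (one_ (inv (inv g))) b by rewrite inv_inv.
rewrite -(act_alpha bgV) -act_alpha; last exact/in_idealMr/act_in.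
by rewrite actM act_invK.
Qed.

Section SkewRing.
Implicit Types (k : mor G) (f : {ffun mor G -> A}).
Local Notation mul := (skew_mul alpha).
Local Notation emb := (skew_emb one_).

Definition single k (d : A) : {ffun mor G -> A} := [ffun k' => if k' == k then d else 0].

Lemma ffun_sum_single f : f = \sum_k single k (f k).
Proof.
apply/ffunP => k; rewrite sum_ffunE (big_only1 k) // ?ffunE ?eqxx // => h hk _.
by rewrite ffunE eq_sym (negbTE hk).
Qed.

Lemma in_skew0 : in_skew one_ 0.
Proof. by move=> g; rewrite /in_ideal ffunE mul0r. Qed.

Lemma in_skewD f f' : in_skew one_ f -> in_skew one_ f' -> in_skew one_ (f + f').
Proof. by move=> fS f'S g; rewrite /in_ideal ffunE mulrDl fS f'S. Qed.

Lemma in_skew_sum (I : Type) (r : seq I) (Q : pred I) (F : I -> {ffun mor G -> A}) :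
  (forall i, Q i -> in_skew one_ (F i)) -> in_skew one_ (\sum_(i <- r | Q i) F i).
Proof. by move=> FS; elim/big_ind: _ => //; [exact: in_skew0 | exact: in_skewD]. Qed.

Lemma in_skew_single k d : in_ideal (one_ k) d -> in_skew one_ (single k d).
Proof. by move=> dk g; rewrite /in_ideal ffunE; case: eqP => [->|_] //; rewrite mul0r. Qed.

Lemma in_skew_emb r : in_skew one_ (emb r).
Proof.
by move=> g; rewrite /in_ideal ffunE; case: ifP; rewrite ?mul0r // -mulrA (upa_idem P).
Qed.

Lemma skew_mulE f f' k : in_skew one_ f ->
  mul f f' k = \sum_(g | tgt g == tgt k) f g * act g (f' (comp (inv g) k)).
Proof.
move=> fS; rewrite ffunE [RHS]big_mkcond /=; apply: eq_bigr => g _.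
under eq_bigr => h _ do rewrite (alpha_alphaV_mul _ (fS g)).
case: eqVneq => [tgk|ntgk].
  rewrite (eq_bigl (pred1 (comp (inv g) k))) ?big_pred1_eq // => h /=.
  by rewrite [RHS]eq_sym comp_invl_eq // [k == _]eq_sym.
rewrite big_pred0 // => h; apply/andP => -[/eqP sgh /eqP ghk].
by move: ntgk; rewrite -ghk tgt_comp // eqxx.
Qed.

Lemma skew_mul_idm f f' e : in_skew one_ f ->
  mul f f' (idm e) = \sum_(g | tgt g == e) f g * act g (f' (inv g)).
Proof.
move=> fS; rewrite skew_mulE // tgt_idm; apply: eq_bigr => g /eqP <-.
by rewrite -src_inv comp_idr.
Qed.

Lemma skew_mul_single_l g b f k : in_ideal (one_ g) b ->
  mul (single g b) f k = if tgt g == tgt k then b * act g (f (comp (inv g) k)) else 0.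
Proof.
move=> bg; rewrite skew_mulE; last exact: in_skew_single.
rewrite big_mkcond (big_only1 g) //= ?ffunE ?eqxx //.
by move=> h hg _; rewrite ffunE (negbTE hg) mul0r; case: ifP.
Qed.

Lemma skew_mul_single_r f h d k : in_skew one_ f ->
  mul f (single h d) k =
  if src h == src k then f (comp k (inv h)) * act (comp k (inv h)) d else 0.
Proof.
move=> fS; rewrite skew_mulE //; case: eqVneq => [shk|nshk]; last first.
  apply: big1 => g /eqP tgk.
  by rewrite ffunE comp_invl_eq_r // (negbTE nshk) /= act0 mulr0.
have tkh : tgt (comp k (inv h)) = tgt k by rewrite tgt_comp ?tgt_inv.
rewrite (big_only1 (comp k (inv h))) ?tkh //.
  by rewrite ffunE comp_invl_eq_r // shk !eqxx.
move=> g gkh /eqP tgk.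
by rewrite ffunE comp_invl_eq_r // shk eqxx (negbTE gkh) /= act0 mulr0.
Qed.

Lemma skew_mul_single g b h c : in_ideal (one_ g) b ->
  mul (single g b) (single h c) =
  if src g == tgt h then single (comp g h) (b * act g c) else 0.
Proof.
move=> bg; apply/ffunP => k; rewrite skew_mul_single_l // ffunE.
case: eqVneq => [tgk|ntgk].
  rewrite comp_invl_eq //; case: (src g == tgt h); rewrite /= ?ffunE.
    by case: eqP; rewrite ?act0 ?mulr0.
  by rewrite act0 mulr0.
case: eqP => [sgh|_]; rewrite ?ffunE //; case: eqP => // kgh.
by move: ntgk; rewrite kgh tgt_comp // eqxx.
Qed.

Lemma skew_mul_emb_l r f k : in_skew one_ f -> mul (emb r) f k = r * f k.
Proof.
move=> fS; have fk := in_ideal_tgt (fS k).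
rewrite skew_mulE; last exact: in_skew_emb.
rewrite (big_only1 (idm (tgt k))) ?tgt_idm //.
  rewrite ffunE src_idm eqxx act_idm inv_idm comp_idl fk.
  by rewrite -mulrA (in_ideal_mul1l fk).
move=> g gk /eqP tgk; rewrite ffunE; case: eqP => [gid|_]; last by rewrite mul0r.
have tg : tgt g = src g by rewrite {1}gid tgt_idm.
by move: gk; rewrite gid -tgk tg eqxx.
Qed.

Lemma skew_mul_emb_r f r k : in_skew one_ f -> mul f (emb r) k = f k * act k r.
Proof.
move=> fS; rewrite skew_mulE // (big_only1 k) //.
  rewrite ffunE comp_invl src_idm eqxx actM act_one ?tgt_idm // comp_idr (upa_idem P).
  by rewrite mulrA -{2}(act_in k r) -mulrA.
move=> g gk /eqP tgk; rewrite ffunE src_comp ?src_inv //.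
by rewrite comp_invl_eq_r ?src_idm ?eqxx //= inv_idm comp_idr (negbTE gk) act0 mulr0.
Qed.

Lemma skew_mul_suml (I : Type) (r : seq I) (Q : pred I) (F : I -> {ffun mor G -> A}) f' :
  (forall i, Q i -> in_skew one_ (F i)) ->
  mul (\sum_(i <- r | Q i) F i) f' = \sum_(i <- r | Q i) mul (F i) f'.
Proof.
move=> FS; apply/ffunP => k; rewrite sum_ffunE skew_mulE; last exact: in_skew_sum.
under eq_bigr do rewrite sum_ffunE mulr_suml.
by rewrite exchange_big; apply: eq_bigr => i Qi; rewrite skew_mulE //; apply: FS.
Qed.

Lemma skew_mul_sumr (I : Type) (r : seq I) (Q : pred I) (F : I -> {ffun mor G -> A}) f :
  in_skew one_ f ->
  mul f (\sum_(i <- r | Q i) F i) = \sum_(i <- r | Q i) mul f (F i).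
Proof.
move=> fS; apply/ffunP => k; rewrite sum_ffunE skew_mulE //.
under eq_bigr do rewrite sum_ffunE act_sum mulr_sumr.
by rewrite exchange_big; apply: eq_bigr => i Qi; rewrite skew_mulE.
Qed.

Lemma in_skew_mul f f' : in_skew one_ f -> in_skew one_ f' -> in_skew one_ (mul f f').
Proof.
move=> fS f'S k; rewrite /in_ideal skew_mulE // mulr_suml.
apply: eq_bigr => g /eqP tgk; rewrite -mulrA.
have sg : src g = tgt (comp (inv g) k) by rewrite tgt_comp ?src_inv // tgt_inv.
by have := act_in_comp sg (f'S _); rewrite compKVg // => ->.
Qed.

Local Notation inA := (fun r => exists a : A, r = emb a).

Section Balanced.
Variables (M : zmodType) (phi : {ffun mor G -> A} -> {ffun mor G -> A} -> M).
Hypothesis bal : balanced (in_skew one_) mul inA phi.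

Lemma balanced0l f : in_skew one_ f -> phi 0 f = 0.
Proof.
case: bal => phiD _ _ fS.
by apply: (additive_in0 (f := phi^~ f) in_skew0) => u v uS vS; apply: phiD.
Qed.

Lemma balanced0r f : in_skew one_ f -> phi f 0 = 0.
Proof.
case: bal => _ phiD _ fS.
by apply: (additive_in0 (f := phi f) in_skew0) => u v uS vS; apply: phiD.
Qed.

Lemma balanced_suml (I : Type) (r : seq I) (Q : pred I) (F : I -> {ffun mor G -> A}) f :
  (forall i, Q i -> in_skew one_ (F i)) -> in_skew one_ f ->
  phi (\sum_(i <- r | Q i) F i) f = \sum_(i <- r | Q i) phi (F i) f.
Proof.
case: bal => phiD _ _ FS fS.
apply: (additive_in_sum (Q := in_skew one_) (f := phi^~ f)) => //.
- exact: in_skew0.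
- exact: in_skewD.
- by move=> u v uS vS; apply: phiD.
Qed.

Lemma balanced_sumr (I : Type) (r : seq I) (Q : pred I) (F : I -> {ffun mor G -> A}) f :
  (forall i, Q i -> in_skew one_ (F i)) -> in_skew one_ f ->
  phi f (\sum_(i <- r | Q i) F i) = \sum_(i <- r | Q i) phi f (F i).
Proof.
case: bal => _ phiD _ FS fS.
apply: (additive_in_sum (Q := in_skew one_) (f := phi f)) => //.
- exact: in_skew0.
- exact: in_skewD.
- by move=> u v uS vS; apply: phiD.
Qed.

Lemma balanced_single g b k c : in_ideal (one_ g) b -> in_ideal (one_ k) c ->
  phi (single g b) (single k c) = phi (single g (b * act g c)) (single k (one_ k)).
Proof.
case: bal => _ _ phiA bg ck.
have kS : in_skew one_ (single k (one_ k)) := in_skew_single (in_ideal_one k).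
have -> : single k c = mul (emb c) (single k (one_ k)).
  apply/ffunP => k'; rewrite skew_mul_emb_l // !ffunE.
  by case: eqP; rewrite ?mulr0.
rewrite -phiA //; [|exact: in_skew_single | by exists c].
congr (phi _ _); apply/ffunP => k'.
rewrite skew_mul_emb_r; last exact: in_skew_single.
by rewrite !ffunE; case: eqP => [->|_]; rewrite ?mul0r.
Qed.

End Balanced.

Lemma balanced_coord e k : tgt k = e ->
  balanced (in_skew one_) mul inA (fun u v => u (idm e) * v k).
Proof.
move=> tke; split.
- by move=> u v w _ _ _; rewrite ffunE mulrDl.
- by move=> u v w _ _ _; rewrite ffunE mulrDr.
move=> u _ v uS [r ->] vS; rewrite skew_mul_emb_r // skew_mul_emb_l // act_idm.
rewrite -!mulrA in_ideal_mul1l //; rewrite -tke; exact: in_ideal_tgt.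
Qed.

Section Necessity.
Hypothesis orth : forall e e' : obj G, e <> e' -> one_ (idm e) * one_ (idm e') = 0.
Variables (n : nat) (x y : 'I_n -> {ffun mor G -> A}).
Hypotheses (xS : forall i, in_skew one_ (x i)) (yS : forall i, in_skew one_ (y i)).
Hypothesis sum_xy : \sum_(i < n) mul (x i) (y i) = emb 1.
Hypothesis xy_central : forall s, in_skew one_ s ->
  forall (M : zmodType) (phi : {ffun mor G -> A} -> {ffun mor G -> A} -> M),
  balanced (in_skew one_) mul inA phi ->
  \sum_(i < n) phi (mul s (x i)) (y i) = \sum_(i < n) phi (x i) (mul (y i) s).

Let a := \sum_(i < n) \sum_(e : obj G) x i (idm e) * y i (idm e).

Lemma diag_central b : a * b = b * a.
Proof.
rewrite /a mulr_suml mulr_sumr.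
under eq_bigr do rewrite mulr_suml.
under [RHS]eq_bigr do rewrite mulr_sumr.
rewrite exchange_big [RHS]exchange_big; apply: eq_bigr => e _.
have /= xyC := xy_central (in_skew_emb b) (balanced_coord (tgt_idm e)).
transitivity (\sum_(i < n) x i (idm e) * mul (y i) (emb b) (idm e)).
  apply: eq_bigr => i _; rewrite skew_mul_emb_r // act_idm -!mulrA.
  by congr (_ * _); rewrite -(upa_central P _ b) mulrA (yS i (idm e)).
by rewrite -xyC; apply: eq_bigr => i _; rewrite skew_mul_emb_l // mulrA.
Qed.

Lemma diag_mul_oneV g :
  \sum_(i < n) act (inv g) (x i g) * y i (inv g) = a * one_ (inv g).
Proof.
have sS := in_skew_single (in_ideal_one (inv g)).
have /= xyC := xy_central sS (balanced_coord (tgt_inv g)).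
transitivity
  (\sum_(i < n) mul (single (inv g) (one_ (inv g))) (x i) (idm (src g)) * y i (inv g)).
  apply: eq_bigr => i _; rewrite skew_mul_single_l; last exact: in_ideal_one.
  rewrite tgt_inv tgt_idm eqxx inv_inv comp_idr in_ideal_mul1l //; exact: act_in.
rewrite xyC /a mulr_suml; apply: eq_bigr => i _.
rewrite skew_mul_single_r // eqxx inv_inv comp_invl act_idm.
rewrite -(tgt_inv g) (upa_sub P) mulr_suml (big_only1 (tgt (inv g))) ?mulrA // => e' ne' _.
rewrite -(yS i (idm e')) -(upa_sub P (inv g)) -!mulrA [one_ (idm e') * _]mulrA.
by rewrite (upa_central P (idm e')) -mulrA orth ?mulr0 //; apply/eqP.
Qed.

Lemma diag_trace j : trace_t one_ alpha j a = one_ (idm j).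
Proof.
have := congr1 (fun f => f (idm j)) sum_xy.
rewrite /= sum_ffunE ffunE src_idm eqxx mul1r => <-.
rewrite (eq_bigr _ (fun i _ => skew_mul_idm (y i) j (xS i))) exchange_big.
apply: eq_bigr => g _; rewrite -/(act g a) -(act_in g a) -act_oneV -actM -diag_mul_oneV.
by rewrite act_sum; apply: eq_bigr => i _; rewrite actM act_invK //; apply: xS.
Qed.

Lemma trace_one_of_separable : exists a : A,
  (forall b, a * b = b * a) /\ forall j, trace_t one_ alpha j a = one_ (idm j).
Proof. by exists a; split; [exact: diag_central | exact: diag_trace]. Qed.

End Necessity.

Section Sufficiency.
Variable a : A.
Hypothesis a_central : forall b, a * b = b * a.
Hypothesis a_trace : forall j, trace_t one_ alpha j a = one_ (idm j).

Let X g := single g (act g a).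
Let Y g := single (inv g) (one_ (inv g)).
Let XS g : in_skew one_ (X g) := in_skew_single (act_in g a).
Let YS g : in_skew one_ (Y g) := in_skew_single (in_ideal_one (inv g)).

Lemma XY_sum : \sum_g mul (X g) (Y g) = emb 1.
Proof.
have XY g : mul (X g) (Y g) = single (idm (tgt g)) (act g a).
  rewrite skew_mul_single; last exact: act_in.
  by rewrite tgt_inv eqxx comp_invr act_oneV act_in.
apply/ffunP => k; rewrite sum_ffunE ffunE.
under eq_bigr do rewrite XY ffunE.
case: eqVneq => [kid|nk].
  rewrite mul1r kid -a_trace /trace_t [RHS]big_mkcond; apply: eq_bigr => g _.
  by rewrite (inj_eq (@idm_inj G)) eq_sym.
by apply: big1 => g _; case: eqP => // kg; move: nk; rewrite kg src_idm eqxx.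
Qed.

Lemma XY_coef h g d : src h = tgt g -> in_ideal (one_ h) d ->
  d * act h (act g a) * act (comp h g) (one_ (inv g)) =
  act (comp h g) a * act (comp h g) (act (inv (comp h g)) d).
Proof.
move=> shg dh; have cC := act_central (comp h g) a_central.
rewrite act_comp // act_one ?src_comp ?tgt_inv // compgK // act_actV.
rewrite [act _ a * one_ h]cC [d * _]mulrA dh -[d * act _ a]cC -mulrA.
by congr (_ * _); rewrite [one_ (comp h g) * _](upa_central P) mulrA dh.
Qed.

Section Centrality.
Variables (M : zmodType) (phi : {ffun mor G -> A} -> {ffun mor G -> A} -> M).
Hypothesis bal : balanced (in_skew one_) mul inA phi.

Lemma XY_central_single h d : in_ideal (one_ h) d ->
  \sum_g phi (mul (single h d) (X g)) (Y g) = \sum_g phi (X g) (mul (Y g) (single h d)).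
Proof.
move=> dh.
transitivity (\sum_(g | src h == tgt g) phi (single (comp h g) (d * act h (act g a))) (Y g)).
  rewrite [RHS]big_mkcond; apply: eq_bigr => g _; rewrite skew_mul_single //.
  by case: ifP => // _; apply: balanced0l.
transitivity (\sum_(g | tgt g == tgt h)
                phi (X g) (single (comp (inv g) h) (act (inv g) d))); last first.
  rewrite [LHS]big_mkcond; apply: eq_bigr => g _.
  rewrite skew_mul_single; last exact: in_ideal_one.
  rewrite src_inv in_ideal_mul1l; last exact: act_in.
  by case: ifP => // _; rewrite (balanced0r bal (XS g)).
rewrite [RHS](reindex_onto (comp h) (comp (inv h))) /=; last first.
  by move=> g /eqP tgh; rewrite compKVg.
have reindexE g :
    (tgt (comp h g) == tgt h) && (comp (inv h) (comp h g) == g) = (src h == tgt g).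
  apply/andP/eqP => [[/eqP thg /eqP hg]|shg].
    by rewrite -hg tgt_comp ?tgt_inv // src_inv thg.
  by rewrite tgt_comp // compKg // !eqxx.
rewrite [RHS](eq_bigl _ _ reindexE); apply: eq_bigr => g /eqP shg.
have hgh : comp (inv (comp h g)) h = inv g by rewrite inv_comp // compgKV // src_inv.
have dI : in_ideal (one_ (inv g)) (act (inv (comp h g)) d).
  by rewrite -hgh; apply: act_in_comp dh; rewrite src_inv tgt_comp.
have dgI : in_ideal (one_ (comp h g)) (d * act h (act g a)).
  by rewrite act_comp //; apply/in_idealMl/in_idealMr/act_in.
rewrite hgh /X /Y (balanced_single bal dgI (in_ideal_one (inv g))).
by rewrite (balanced_single bal (act_in _ a) dI) XY_coef.
Qed.

Lemma XY_central s : in_skew one_ s ->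
  \sum_g phi (mul s (X g)) (Y g) = \sum_g phi (X g) (mul (Y g) s).
Proof.
move=> sS; have hS h : in_skew one_ (single h (s h)) := in_skew_single (sS h).
have sXE g : phi (mul s (X g)) (Y g) = \sum_h phi (mul (single h (s h)) (X g)) (Y g).
  rewrite {1}(ffun_sum_single s) skew_mul_suml; last by move=> h _; exact: hS.
  by apply: (balanced_suml bal) => // h _; exact: in_skew_mul.
have YsE g : phi (X g) (mul (Y g) s) = \sum_h phi (X g) (mul (Y g) (single h (s h))).
  rewrite {1}(ffun_sum_single s) skew_mul_sumr //.
  by apply: (balanced_sumr bal) => // h _; exact: in_skew_mul.
rewrite (eq_bigr _ (fun g _ => sXE g)) (eq_bigr _ (fun g _ => YsE g)).
by rewrite exchange_big [RHS]exchange_big; apply: eq_bigr => h _; apply: XY_central_single.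
Qed.

End Centrality.

Lemma separable_of_trace : separable_ext (in_skew one_) mul (emb 1) inA.
Proof.
apply: (separable_ext_fin (x := X) (y := Y)) => [g||s sS M phi bal].
- by split; [exact: XS | exact: YS].
- exact: XY_sum.
- exact: XY_central.
Qed.

End Sufficiency.

End SkewRing.

End PartialAction.

Unset Implicit Arguments.

Theorem theorem3p2 (G : groupoid) (A : pzRingType)
  (one_ : mor G -> A) (alpha : mor G -> A -> A) :
  connected G ->
  (* A = (+)_i A_{e_i}: the 1_{e_i} are orthogonal and sum to 1 *)
  \sum_(e : obj G) one_ (idm e) = 1 ->
  (forall e f : obj G, e <> f -> one_ (idm e) * one_ (idm f) = 0) ->
  unital_partial_action one_ alpha ->
  (separable_ext (in_skew one_) (skew_mul alpha) (skew_emb one_ 1)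
      (fun r => exists a : A, r = skew_emb one_ a)
   <->
   exists a : A, (forall b : A, a * b = b * a) /\
     forall j : obj G, trace_t one_ alpha j a = one_ (idm j)).
Proof.
move=> _ _ orth P; split.
- case=> n [x [y [xyS sum_xy xy_central]]].
  exact: (trace_one_of_separable P orth (fun i => (xyS i).1) (fun i => (xyS i).2)
    sum_xy xy_central).
- by case=> a [a_central a_trace]; exact: (separable_of_trace P a_central a_trace).
Qed.
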